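(* Let $K$ be a $\mathcal{CR}(D/\Phi(D))$-module, regarded as a $D$-module via $D\to D/\Phi(D)$. Then $\mathrm{H}^1(D,K)\cong\mathrm{H}^1(D/\Phi(D),K)\oplus\mathrm{F}_p^{\binom d2}$.
   Context: $p$ is an odd prime, $d\ge2$, and $D=\langle y_1,\dots,y_d\rangle$ is a finite $p$-group of exponent $p$ and class $2$ with $|D/\Phi(D)|=p^d$ and $|\Phi(D)/\gamma_3(D)|=p^{\binom d2}$. For a finite $p$-group $L$, an $\mathrm{F}_p(L)$-module $M$ is called a $\mathcal{CR}(L)$-module if $C_M(L)\cong\mathrm{F}_p$ and $\mathrm{H}^1(L,M)$ has order at most $p$. *)

From HB Require Import structures.
From mathcomp Require Import all_boot all_order all_algebra all_fingroup all_solvable.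
From mathcomp Require Import mxrepresentation.
Set Implicit Arguments. Unset Strict Implicit. Unset Printing Implicit Defensive.
Import GRing.Theory.

(* Cochains with values in the row space 'rV['F_p]_n (the underlying space of
   an F_p-module of dimension n). *)
Definition cochain (gT : finGroupType) (p n : nat) := {ffun gT -> 'rV['F_p]_n}.
HB.instance Definition _ gT p n := GRing.Zmodule.on (cochain gT p n).
HB.instance Definition _ gT p n := Finite.on (cochain gT p n).
Definition cochain_group (gT : finGroupType) (p n : nat) : finGroupType :=
  FinRing.Zmodule_to_finGroup (cochain gT p n).

Local Open Scope ring_scope.

(* The group L (a subset of the ambient finGroupType gT) acts on the right on
   'rV['F_p]_n through rho: v |-> v *m rho x (MathComp convention for matrix
   representations).  Cochains are required to vanish outside L, so that
   they are exactly the functions L -> F_p^n. *)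

Definition Z1 (gT : finGroupType) (p n : nat) (L : {set gT})
    (rho : gT -> 'M['F_p]_n) : {set cochain_group gT p n} :=
  [set f : cochain_group gT p n |
     [forall x, (x \notin L) ==> (f x == 0)] &&
     [forall x in L, forall y in L, f (x * y)%g == f x *m rho y + f y]].
Arguments Z1 {gT} p {n} L rho.

Definition B1 (gT : finGroupType) (p n : nat) (L : {set gT})
    (rho : gT -> 'M['F_p]_n) : {set cochain_group gT p n} :=
  [set f : cochain_group gT p n | [exists v : 'rV['F_p]_n,
     [forall x, f x == (if x \in L then v *m rho x - v else 0)]]].
Arguments B1 {gT} p {n} L rho.

Definition H1 (gT : finGroupType) (p n : nat) (L : {set gT})
    (rho : gT -> 'M['F_p]_n) :=
  (Z1 p L rho / B1 p L rho)%g.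
Arguments H1 {gT} p {n} L rho.

Definition CR_module (gT : finGroupType) (p : nat) (L : {group gT}) (n : nat)
    (rG : mx_representation 'F_p L n) : Prop :=
  \rank (rfix_mx rG L) = 1%N /\ (#|H1 p L rG| <= p)%N.
Arguments CR_module {gT} p L {n} rG.

Definition Fp_space (p m : nat) : finGroupType :=
  FinRing.Zmodule_to_finGroup 'rV['F_p]_m.

From mathcomp Require Import all_boot all_order all_algebra all_fingroup all_solvable.
From mathcomp Require Import mxrepresentation mxabelem ring.
Set Implicit Arguments. Unset Strict Implicit. Unset Printing Implicit Defensive.
Import GRing.Theory.
Local Open Scope group_scope.

(* Since D has exponent p and class 2, Phi(D) = D' is central and elementary
   abelian, and it acts trivially on K.  Hence a 1-cocycle f of D restricts on
   Phi(D) to a homomorphism into C_K(E) = F_p w (E = D/Phi(D)), the cocycles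
   vanishing on Phi(D) are exactly the inflations of cocycles of E, and the
   coboundaries of D are inflated from E.  The point is that every
   homomorphism lam : Phi(D) -> F_p is such a restriction.  Writing elements of
   D as words y_1^a_1 ... y_m^a_m times an element of Phi(D), the obstruction
   to extending lam w is the collection form sum_(i<j) lam [y_j, y_i] a_j b_i.
   As |H^1(E, K)| <= p, for every pair i, j some nonzero combination
   (s a_i + t a_j) w is a coboundary; these coboundaries account for the
   alternating part of the form, and its symmetric part is the polarisation of
   a quadratic form because p is odd.  Thus |Z^1(D)| = |Z^1(E)| |Phi(D)| and
   |B^1(D)| = |B^1(E)|, and both sides of the isomorphism are elementary
   abelian p-groups of the same order. *)

Section Cochains.
Variables (gT : finGroupType) (p n : nat).
Local Notation cochain := (cochain_group gT p n).

Lemma cochain_mulE (f g : cochain) : f * g = (f + g)%R. Proof. by []. Qed.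
Lemma cochain_oneE : (1 : cochain) = 0%R. Proof. by []. Qed.
Lemma cochain_invE (f : cochain) : f^-1 = (- f)%R. Proof. by []. Qed.

Lemma cochain_expE (f : cochain) k : f ^+ k = (f *+ k)%R.
Proof. by elim: k => [|k IH]; rewrite ?expg0 ?mulr0n // expgS IH mulrS. Qed.

Lemma abelian_cochain : abelian [set: cochain].
Proof. by apply/centsP => f _ g _; rewrite /commute !cochain_mulE addrC. Qed.

Lemma cochain_norm (A : {set cochain}) (f : cochain) : f \in 'N(A).
Proof. by rewrite (subsetP (sub_abelian_norm abelian_cochain (subsetT A))) ?inE. Qed.

Lemma abelem_cochain (A : {group cochain}) : prime p -> p.-abelem A.
Proof.
move=> pr; apply/abelemP => //; split; first exact: abelianS (subsetT A) abelian_cochain.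
move=> f _; rewrite cochain_expE cochain_oneE; apply/ffunP => x; rewrite ffunMnE ffunE.
by rewrite -scaler_nat (pcharf0 (pchar_Fp pr)) scale0r.
Qed.

Variables (L : {group gT}) (rho : gT -> 'M['F_p]_n).

Lemma Z1P (f : cochain) :
  reflect ((forall x, x \notin L -> f x = 0%R) /\
           {in L &, forall x y, f (x * y) = (f x *m rho y + f y)%R})
          (f \in Z1 p L rho).
Proof.
rewrite inE; apply: (iffP andP) => [[/forallP f0 /forall_inP fM] | [f0 fM]]; split.
- by move=> x /(implyP (f0 x)) /eqP.
- by move=> x y xL yL; apply/eqP; move/forall_inP: (fM x xL); apply.
- by apply/forallP => x; apply/implyP => /f0 ->.
by apply/forall_inP => x xL; apply/forall_inP => y yL; rewrite fM.
Qed.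

Lemma B1P (f : cochain) :
  reflect (exists v, forall x, f x = if x \in L then (v *m rho x - v)%R else 0%R)
          (f \in B1 p L rho).
Proof.
rewrite inE; apply: (iffP existsP) => [[v /forallP fv] | [v fv]]; exists v.
  by move=> x; apply/eqP.
by apply/forallP => x; rewrite fv.
Qed.

Lemma Z1_group_set : group_set (Z1 p L rho).
Proof.
apply/group_setP; split.
  by apply/Z1P; split=> [x _ | x y _ _]; rewrite cochain_oneE !ffunE ?mul0mx ?addr0.
move=> f g /Z1P[f0 fM] /Z1P[g0 gM]; apply/Z1P; split=> [x xL | x y xL yL].
  by rewrite cochain_mulE ffunE f0 ?g0 ?addr0.
by rewrite cochain_mulE !ffunE fM ?gM // mulmxDl addrACA.
Qed.
Canonical Z1_group := Group Z1_group_set.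

Lemma B1_group_set : group_set (B1 p L rho).
Proof.
apply/group_setP; split.
  by apply/B1P; exists 0%R => x; rewrite ffunE mul0mx subrr; case: ifP.
move=> f g /B1P[v fv] /B1P[u gu]; apply/B1P; exists (v + u)%R => x.
rewrite cochain_mulE ffunE fv gu; case: ifP; rewrite ?addr0 //.
by rewrite mulmxDl opprD addrACA.
Qed.
Canonical B1_group := Group B1_group_set.

Lemma abelem_H1 : prime p -> p.-abelem (H1 p L rho).
Proof. by move=> pr; apply/quotient_abelem/abelem_cochain. Qed.

Lemma Z1_1 (f : cochain) : rho 1 = 1%:M%R -> f \in Z1 p L rho -> f 1 = 0%R.
Proof.
move=> rho1 /Z1P[_ fM]; move/esym/eqP: (fM 1 1 (group1 L) (group1 L)).
by rewrite mulg1 rho1 mulmx1 -subr_eq0 addrK => /eqP.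
Qed.

Hypothesis rhoM : {in L &, {morph rho : x y / x * y >-> (x *m y)%R}}.

Lemma B1_sub_Z1 : B1 p L rho \subset Z1 p L rho.
Proof.
apply/subsetP => f /B1P[v fv]; apply/Z1P; split=> [x /negbTE xL | x y xL yL].
  by rewrite fv xL.
by rewrite !fv groupM // xL yL rhoM // mulmxBl mulmxA addrA subrK.
Qed.

Lemma card_Z1 : #|Z1 p L rho| = (#|H1 p L rho| * #|B1 p L rho|)%N.
Proof.
rewrite card_quotient; last by apply/subsetP => f _; apply: cochain_norm.
by rewrite mulnC Lagrange ?B1_sub_Z1.
Qed.

End Cochains.

Section Inflation.
Variables (gT : finGroupType) (p n : nat) (L N : {group gT}).
Hypothesis nsNL : N <| L.
Variable K : mx_representation 'F_p (L / N)%G n.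
Local Notation rho := (fun x => K (coset N x)).

Let nNL : {subset L <= 'N(N)} := subsetP (normal_norm nsNL).

Lemma repr_cosetM : {in L &, {morph rho : x y / x * y >-> (x *m y)%R}}.
Proof. by move=> x y xL yL /=; rewrite morphM ?nNL // repr_mxM ?mem_quotient. Qed.

Lemma repr_coset_id u : u \in N -> K (coset N u) = 1%:M%R.
Proof. by move=> uN; rewrite coset_id // repr_mx1. Qed.

Lemma mem_repr_quotient xi : xi \in L / N -> repr xi \in L.
Proof.
by move=> xiL; rewrite -(quotientGK nsNL) mem_morphpre ?repr_coset_norm //= coset_reprK.
Qed.

Definition infl (g : cochain_group (coset_of N) p n) : cochain_group gT p n :=
  [ffun x => if x \in L then g (coset N x) else 0%R].

Lemma infl_Z1 g : g \in Z1 p (L / N) K -> infl g \in Z1 p L rho.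
Proof.
move=> /Z1P[_ gM]; apply/Z1P; split=> [x /negbTE xL | x y xL yL].
  by rewrite ffunE xL.
by rewrite !ffunE groupM // xL yL morphM ?nNL // gM ?mem_quotient.
Qed.

Lemma infl_inj : {in Z1 p (L / N) K &, injective infl}.
Proof.
move=> g g' /Z1P[g0 _] /Z1P[g'0 _] /ffunP eq_gg'; apply/ffunP => xi.
have [/morphimP[x _ xL ->] | xiL] := boolP (xi \in L / N); last by rewrite g0 ?g'0.
by have := eq_gg' x; rewrite !ffunE xL.
Qed.

Lemma infl_N g u : g \in Z1 p (L / N) K -> u \in N -> infl g u = 0%R.
Proof.
move=> gZ uN; rewrite ffunE (subsetP (normal_sub nsNL)) // coset_id //.
exact: Z1_1 (repr_mx1 K) gZ.
Qed.

Lemma B1_infl : B1 p L rho = infl @: B1 p (L / N) K.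
Proof.
apply/setP => f; apply/B1P/imsetP => [[v fv] | [g /B1P[v gv] ->]].
  exists [ffun xi => if xi \in L / N then (v *m K xi - v)%R else 0%R].
    by apply/B1P; exists v => xi; rewrite ffunE.
  by apply/ffunP => x; rewrite fv !ffunE; case: ifP => // xL; rewrite mem_quotient.
by exists v => x; rewrite ffunE gv; case: ifP => // xL; rewrite mem_quotient.
Qed.

Section CocyclesTrivialOnN.
Variable h : cochain_group gT p n.
Hypotheses (hZ : h \in Z1 p L rho) (hN : {in N, forall u, h u = 0%R}).

Lemma Z1_coset_const x x' : x \in L -> x' \in L -> coset N x = coset N x' -> h x = h x'.
Proof.
move=> xL x'L eq_xx'; have /Z1P[_ hM] := hZ.
have uN : x'^-1 * x \in N.
  apply: coset_idr; first by rewrite nNL ?groupM ?groupV.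
  by rewrite morphM ?morphV ?nNL ?groupV //= eq_xx' mulVg.
have uL := subsetP (normal_sub nsNL) _ uN.
by rewrite -(mulKVg x' x) hM // repr_coset_id // mulmx1 (hN uN) addr0.
Qed.

Lemma Z1_infl : h \in infl @: Z1 p (L / N) K.
Proof.
have /Z1P[h0 hM] := hZ.
pose g := [ffun xi => if xi \in L / N then h (repr xi) else 0%R].
apply/imsetP; exists g.
  apply/Z1P; split=> [xi /negbTE xiL | xi et xiL etL]; first by rewrite ffunE xiL.
  rewrite !ffunE groupM // xiL etL -{2}(coset_reprK et) -hM ?mem_repr_quotient //.
  apply: Z1_coset_const; rewrite ?groupM ?mem_repr_quotient ?groupM //.
  by rewrite coset_reprK morphM ?repr_coset_norm //= !coset_reprK.
apply/ffunP => x; rewrite !ffunE; have [xL | /h0 //] := boolP (x \in L).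
rewrite mem_quotient //; apply: Z1_coset_const; rewrite ?mem_repr_quotient ?mem_quotient //.
by rewrite coset_reprK.
Qed.

End CocyclesTrivialOnN.

End Inflation.

Fixpoint pairs (T : Type) (s : seq T) : seq (T * T) :=
  if s is i :: s' then [seq (i, j) | j <- s'] ++ pairs s' else [::].

Section FpHom.
Variables (gT : finGroupType) (p : nat).

Definition Fp_hom (P : {set gT}) : {set {ffun gT -> 'F_p}} :=
  [set lam : {ffun gT -> 'F_p} | [forall x, (x \notin P) ==> (lam x == 0%R)] &&
     [forall x in P, forall y in P, lam (x * y) == (lam x + lam y)%R]].

Variable P : {group gT}.

Lemma Fp_homP (lam : {ffun gT -> 'F_p}) :
  reflect ((forall x, x \notin P -> lam x = 0%R) /\
           {in P &, {morph lam : x y / x * y >-> (x + y)%R}})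
          (lam \in Fp_hom P).
Proof.
rewrite inE; apply: (iffP andP) => [[/forallP l0 /forall_inP lM] | [l0 lM]]; split.
- by move=> x /(implyP (l0 x)) /eqP.
- by move=> x y xP yP; apply/eqP; move/forall_inP: (lM x xP); apply.
- by apply/forallP => x; apply/implyP => /l0 ->.
by apply/forall_inP => x xP; apply/forall_inP => y yP; rewrite lM.
Qed.

Section Additive.
Variable lam : gT -> 'F_p.
Hypothesis lamM : {in P &, {morph lam : x y / x * y >-> (x + y)%R}}.

Lemma Fp_hom1 : lam 1 = 0%R.
Proof.
by move/esym/eqP: (lamM (group1 P) (group1 P)); rewrite mulg1 -subr_eq0 addrK => /eqP.
Qed.

Lemma Fp_homX u k : u \in P -> lam (u ^+ k) = (lam u *+ k)%R.
Proof.
by move=> uP; elim: k => [|k IH]; rewrite ?Fp_hom1 // expgSr lamM ?groupX // IH mulrSr.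
Qed.

Lemma Fp_hom_prod (I : Type) (r : seq I) (F : I -> gT) :
  (forall i, F i \in P) -> lam (\prod_(i <- r) F i) = (\sum_(i <- r) lam (F i))%R.
Proof.
move=> FP; elim: r => [|i r IH]; first by rewrite !big_nil Fp_hom1.
by rewrite !big_cons lamM ?IH // group_prod.
Qed.

End Additive.

Section ElementaryAbelian.
Hypotheses (abP : p.-abelem P) (ntP : P :!=: 1).
Local Notation rV := 'rV['F_p]_(abelem_dim' P).+1.

Definition row_hom (v : rV) : {ffun gT -> 'F_p} :=
  [ffun x => if x \in P then (\sum_k v 0 k * abelem_rV abP ntP x 0 k)%R else 0%R].

Lemma row_hom_Fp_hom v : row_hom v \in Fp_hom P.
Proof.
apply/Fp_homP; split=> [x /negbTE xP | x y xP yP]; first by rewrite ffunE xP.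
rewrite !ffunE groupM // xP yP abelem_rV_M // -big_split /=.
by apply: eq_bigr => k _; rewrite mxE mulrDr.
Qed.

Lemma row_hom_inj : injective row_hom.
Proof.
move=> v v' /ffunP/(_ (rVabelem abP ntP (delta_mx 0 _)%R)) eq_vv'; apply/rowP => k.
move: (eq_vv' k); rewrite !ffunE mem_rVabelem rVabelemK.
rewrite (bigD1 k) // [in RHS](bigD1 k) //= !big1 ?addr0 ?mxE ?eqxx ?mulr1 // => j jk.
all: by rewrite mxE (negbTE jk) andbF mulr0.
Qed.

Lemma Fp_hom_row_hom : Fp_hom P = row_hom @: setT.
Proof.
apply/setP => lam; apply/idP/imsetP => [/Fp_homP[l0 lM] | [v _ ->]]; last first.
  exact: row_hom_Fp_hom.
exists (\row_k lam (rVabelem abP ntP (delta_mx 0 k)))%R; first by rewrite inE.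
apply/ffunP => x; rewrite ffunE; have [xP | /l0 //] := boolP (x \in P).
pose mu u := lam (rVabelem abP ntP u).
have muD : {morph mu : u v / (u + v)%R}.
  by move=> u v; rewrite /mu rVabelemD lM ?mem_rVabelem.
have mu0 : mu 0%R = 0%R by rewrite /mu rVabelem0 (Fp_hom1 lM).
have -> : lam x = mu (abelem_rV abP ntP x) by rewrite /mu abelem_rV_K.
rewrite {1}(row_sum_delta (abelem_rV abP ntP x)) (big_morph mu muD mu0).
apply: eq_bigr => k _; rewrite /mu rVabelemZ Fp_homX ?mem_rVabelem // mxE.
by rewrite -mulr_natl natr_Zp mulrC.
Qed.

End ElementaryAbelian.

Lemma card_Fp_hom : p.-abelem P -> #|Fp_hom P| = #|P|.
Proof.
move=> abP; have [P1 | ntP] := eqVneq P 1%G; last first.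
  rewrite (Fp_hom_row_hom abP ntP) card_imset ?cardsT ?card_abelem_rV //.
  exact: row_hom_inj.
have -> : #|P| = 1%N by rewrite P1 cards1.
apply/eqP/cards1P; exists [ffun=> 0%R]; apply/setP => lam.
rewrite in_set1; apply/Fp_homP/eqP => [[l0 lM] | ->]; last first.
  by split=> [x|x y]; rewrite !ffunE ?addr0.
apply/ffunP => x; rewrite ffunE; have [| /l0 //] := boolP (x \in P).
by rewrite P1 => /set1P ->; apply: Fp_hom1 lM.
Qed.

End FpHom.

Section ClassTwoExponentP.
Variables (gT : finGroupType) (p : nat) (D : {group gT}).
Hypotheses (pD : p.-group D) (expD : exponent D = p) (cl2 : nil_class D = 2).

Lemma quotient_Phi_neq1 : (D / 'Phi(D))%G :!=: 1.
Proof.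
have ntD : D :!=: 1 by rewrite -nil_class0 cl2.
apply: contraTneq (Phi_proper ntD) => E1; rewrite properE negb_and negbK.
by rewrite -(quotient_sub1 (normal_norm (Phi_normal D))) E1 subxx orbT.
Qed.

Lemma expg_p x : x \in D -> x ^+ p = 1.
Proof. by rewrite -expD; apply: expg_exponent. Qed.

Lemma Phi_der1 : 'Phi(D) = D^`(1).
Proof.
suff Mho1 : 'Mho^1(D) = 1 by rewrite (Phi_joing pD) Mho1 joingG1.
rewrite (MhoE 1 pD); apply/trivgP; rewrite gen_subG.
by apply/subsetP => _ /imsetP[x xD ->]; rewrite expn1 expg_p ?inE.
Qed.

Lemma Phi_sub_cent : 'Phi(D) \subset 'C(D).
Proof.
rewrite Phi_der1; apply/commG1P; rewrite -lcn2 -lcnSn.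
by apply/(lcn_nil_classP 2 (pgroup_nil pD)); rewrite cl2.
Qed.

Lemma Phi_commute (u x : gT) : u \in 'Phi(D) -> x \in D -> u * x = x * u.
Proof. by move=> uP xD; apply: (centP (subsetP Phi_sub_cent u uP)). Qed.

Lemma mem_commg_Phi x y : x \in D -> y \in D -> [~ x, y] \in 'Phi(D).
Proof. by move=> xD yD; rewrite Phi_der1 mem_commg. Qed.

Lemma commMgD x y z : x \in D -> y \in D -> z \in D ->
  [~ x * y, z] = [~ x, z] * [~ y, z].
Proof.
move=> xD yD zD; rewrite commMgJ conjgE.
by rewrite (Phi_commute (mem_commg_Phi xD zD) yD) mulKg.
Qed.

Lemma commXXgD x y i j : x \in D -> y \in D -> [~ x ^+ i, y ^+ j] = [~ x, y] ^+ (i * j).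
Proof.
by move=> xD yD; apply: commXXg; apply/esym/Phi_commute; rewrite ?mem_commg_Phi.
Qed.

Lemma abelem_Phi : prime p -> p.-abelem 'Phi(D).
Proof.
move=> pr; apply/abelemP => //; split; last by move=> u /(subsetP (Phi_sub D)) /expg_p.
by apply/centsP => u uP v vP; apply: Phi_commute uP (subsetP (Phi_sub D) v vP).
Qed.

Section Collection.
Variables (I : Type) (y : I -> gT).
Hypothesis yD : forall i, y i \in D.

Definition monomial (s : seq I) (a : I -> nat) : gT := \prod_(i <- s) y i ^+ a i.

Lemma monomial_mem s a : monomial s a \in D.
Proof. by apply: group_prod => i _; rewrite groupX. Qed.

Lemma commg_monomial s a z k : z \in D ->
  [~ monomial s a, z ^+ k] = \prod_(j <- s) [~ y j, z] ^+ (a j * k).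
Proof.
move=> zD; elim: s => [|j s IH]; first by rewrite /monomial !big_nil comm1g.
rewrite /monomial !big_cons -/(monomial s a) commMgD ?groupX ?monomial_mem //.
by rewrite IH commXXgD.
Qed.

Lemma prod_pairs_cons (F : I * I -> gT) i s :
  \prod_(ij <- pairs (i :: s)) F ij = (\prod_(j <- s) F (i, j)) * \prod_(ij <- pairs s) F ij.
Proof. by rewrite /= big_cat big_map. Qed.

Lemma collection s a b :
  monomial s a * monomial s b = monomial s (fun i => a i + b i)%N *
    \prod_(ij <- pairs s) [~ y ij.2, y ij.1] ^+ (a ij.2 * b ij.1).
Proof.
elim: s => [|i s IH]; first by rewrite /monomial !big_nil mulg1.
rewrite prod_pairs_cons /monomial !big_cons -!/(monomial s _) expgD.
set c := [~ monomial s a, y i ^+ b i]; set W := \prod_(ij <- pairs s) _ in IH *.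
have -> : \prod_(j <- s) [~ y (i, j).2, y (i, j).1] ^+ (a (i, j).2 * b (i, j).1) = c.
  by rewrite /c commg_monomial.
have cP : c \in 'Phi(D) by rewrite mem_commg_Phi ?groupX ?monomial_mem.
have WP : W \in 'Phi(D) by rewrite group_prod // => ij _; rewrite groupX ?mem_commg_Phi.
have cMa : monomial s a * y i ^+ b i = y i ^+ b i * monomial s a * c := commgC _ _.
clearbody c W.
have cW : c * W = W * c by apply: Phi_commute; rewrite ?(subsetP (Phi_sub D)).
have cMb : c * monomial s b = monomial s b * c by apply: Phi_commute; rewrite ?monomial_mem.
rewrite cW !mulgA -(mulgA _ _ W) -IH.
by rewrite mulgA -(mulgA (y i ^+ a i)) cMa -!mulgA cMb.
Qed.

End Collection.

End ClassTwoExponentP.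

Section WedgePartner.
Variable F : fieldType.
Local Open Scope ring_scope.

Definition wedge_partner (s t x y : F) := if s != 0 then s^-1 * y else - (t^-1 * x).

Lemma wedge_partnerD s t x y x' y' :
  wedge_partner s t (x + x') (y + y') = wedge_partner s t x y + wedge_partner s t x' y'.
Proof. by rewrite /wedge_partner; case: ifP => _; ring. Qed.

Lemma wedge_partnerP s t x y x' y' : (s, t) != (0, 0) ->
  wedge_partner s t x y * (s * x' + t * y') - wedge_partner s t x' y' * (s * x + t * y)
    = y * x' - y' * x.
Proof.
rewrite /wedge_partner xpair_eqE negb_and.
by have [-> /= t_nz | s_nz _ /=] := eqVneq s 0; field.
Qed.

End WedgePartner.

Lemma expgD_Fp (gT : finGroupType) p (x : gT) (a b : 'F_p) :
  prime p -> x ^+ p = 1 -> x ^+ (a + b)%R = x ^+ a * x ^+ b.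
Proof.
move=> pr xp; have xp' : x ^+ (Zp_trunc (pdiv p)).+2 = 1 by rewrite Fp_cast.
by rewrite -expgD -[RHS](expg_mod _ xp').
Qed.

Section CRModule.
Variables (gT : finGroupType) (p : nat) (D : {group gT}) (n : nat).
Variable K : mx_representation 'F_p (D / 'Phi(D))%G n.
Hypotheses (pr : prime p) (oddp : odd p) (pD : p.-group D).
Hypotheses (expD : exponent D = p) (cl2 : nil_class D = 2).
Hypothesis CR : CR_module p (D / 'Phi(D))%G K.

Local Notation P := 'Phi(D).
Local Notation E := (D / 'Phi(D))%G.
Local Notation rho := (fun x => K (coset 'Phi(D) x)).
Local Notation m := (abelem_dim' (D / 'Phi(D))).+1.
Local Open Scope ring_scope.

Let nsPD : 'Phi(D)%G <| D := Phi_normal D.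
Let nPD : {subset D <= 'N(P)} := subsetP (normal_norm nsPD).
Let abE : p.-abelem E := Phi_quotient_abelem pD.
Let ntE : E :!=: 1%g := quotient_Phi_neq1 cl2.
Local Notation aE := (abelem_rV abE ntE).

Definition fixed_vec : 'rV['F_p]_n := nz_row (rfix_mx K E).
Local Notation w := fixed_vec.

Lemma fixed_vec_neq0 : w != 0.
Proof. by rewrite nz_row_eq0 -mxrank_eq0 CR.1. Qed.

Lemma fixed_vecK xi : xi \in E -> w *m K xi = w.
Proof. exact/rfix_mxP/nz_row_sub. Qed.

Definition coef (v : 'rV['F_p]_n) : 'F_p := (v *m pinvmx w) 0 0.

Lemma coefK v : (v <= rfix_mx K E)%MS -> coef v *: w = v.
Proof.
move=> vfix; have /andP[_ fix_w] : (w == rfix_mx K E)%MS.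
  by rewrite -(mxrank_leqif_eq (nz_row_sub _)).2 rank_rV fixed_vec_neq0 CR.1.
by rewrite /coef -mul_scalar_mx -mx11_scalar mulmxKpV // (submx_trans vfix).
Qed.

Lemma coefD v v' : coef (v + v') = coef v + coef v'.
Proof. by rewrite /coef mulmxDl mxE. Qed.

Lemma coefZ a : coef (a *: w) = a.
Proof.
have : (coef (a *: w) - a) *: w = 0.
  by rewrite scalerBl coefK ?subrr // scalemx_sub ?nz_row_sub.
by move/eqP; rewrite scaler_eq0 (negbTE fixed_vec_neq0) orbF subr_eq0 => /eqP.
Qed.

Definition coords x : 'rV['F_p]_m := aE (coset P x).

Lemma coordsM x y : x \in D -> y \in D -> coords (x * y)%g = coords x + coords y.
Proof. by move=> xD yD; rewrite /coords morphM ?nPD // abelem_rV_M ?mem_quotient. Qed.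

Lemma coords_Phi u : u \in P -> coords u = 0.
Proof. by move=> uP; rewrite /coords coset_id // abelem_rV_1. Qed.

Definition gen (i : 'I_m) : gT := repr (rVabelem abE ntE (delta_mx 0 i)).

Lemma gen_mem i : gen i \in D.
Proof. exact/(mem_repr_quotient nsPD)/mem_rVabelem. Qed.

Definition word (a : 'rV['F_p]_m) : gT :=
  monomial gen (index_enum 'I_m) (fun i => a 0 i).

Lemma word_mem a : word a \in D.
Proof. exact/monomial_mem/gen_mem. Qed.

Lemma coords_word a : coords (word a) = a.
Proof.
rewrite /coords /word /monomial (morph_prod [morphism of coset P]); last first.
  by move=> i _; rewrite nPD ?groupX ?gen_mem.
rewrite -[RHS](rVabelemK abE ntE) {2}(row_sum_delta a).
rewrite (big_morph _ (rVabelemD abE ntE) (rVabelem0 abE ntE)); congr (abelem_rV _ _ _).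
apply: eq_bigr => i _; rewrite morphX ?nPD ?gen_mem //= rVabelemZ.
by rewrite /gen coset_reprK.
Qed.

Lemma word0 : word 0 = 1%g.
Proof. by rewrite /word /monomial big1 // => i _; rewrite mxE expg0. Qed.

Lemma coset_word_coords x : x \in D -> coset P (word (coords x)) = coset P x.
Proof.
move=> xD; rewrite -[LHS](abelem_rV_K abE ntE) ?mem_quotient ?word_mem //.
by rewrite -/(coords _) coords_word /coords abelem_rV_K ?mem_quotient.
Qed.

Lemma word_coords_Phi x : x \in D -> ((word (coords x))^-1 * x)%g \in P.
Proof.
move=> xD; apply: coset_idr; first by rewrite nPD ?groupM ?groupV ?word_mem.
by rewrite morphM ?morphV ?nPD ?groupV ?word_mem //= coset_word_coords ?mulVg.
Qed.

Definition cobound_spec (ij : 'I_m * 'I_m) (stu : 'F_p * 'F_p * 'rV['F_p]_n) :=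
  (stu.1 != (0, 0)) && [forall x in D, stu.2 *m rho x ==
     stu.2 + (stu.1.1 * coords x 0 ij.1 + stu.1.2 * coords x 0 ij.2) *: w].

Lemma cobound_spec_exists ij : exists stu, cobound_spec ij stu.
Proof.
pose phi (st : 'F_p * 'F_p) : cochain_group (coset_of P) p n :=
  [ffun xi => if xi \in E then (st.1 * aE xi 0 ij.1 + st.2 * aE xi 0 ij.2) *: w else 0].
have phiZ st : phi st \in Z1 p E K.
  apply/Z1P; split=> [xi /negbTE xiE | xi et xiE etE]; first by rewrite ffunE xiE.
  rewrite !ffunE groupM // xiE etE abelem_rV_M // -scalemxAl fixed_vecK // -scalerDl !mxE.
  by congr (_ *: w); ring.
have phiB st st' : (phi st * (phi st')^-1)%g = phi (st.1 - st'.1, st.2 - st'.2).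
  rewrite cochain_mulE cochain_invE; apply/ffunP => xi; rewrite !ffunE.
  by case: ifP => _; rewrite ?subrr // -scalerBl; congr (_ *: w); rewrite /=; ring.
(* The p^2 classes of the cocycles [phi st] cannot be distinct in H^1(E, K). *)
have : ~~ injectiveb (fun st => coset (B1 p E K) (phi st)).
  apply/injectiveP => phi_inj.
  have sub : (fun st => coset (B1 p E K) (phi st)) @: setT \subset H1 p E K.
    by apply/subsetP => _ /imsetP[st _ ->]; rewrite mem_quotient ?phiZ.
  have := leq_trans (subset_leq_card sub) CR.2.
  by rewrite card_imset // cardsT card_prod card_Fp // leqNgt ltn_Pmull ?prime_gt1 ?prime_gt0.
case/injectivePn => st [st' neq_st /rcoset_kercosetP].
rewrite !cochain_norm => /(_ isT isT); rewrite mem_rcoset phiB => /B1P[v phi_v].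
exists ((st.1 - st'.1, st.2 - st'.2), v); apply/andP; split.
  apply: contra neq_st; rewrite xpair_eqE !subr_eq0 => /andP[/eqP e1 /eqP e2].
  by rewrite [st]surjective_pairing [st']surjective_pairing e1 e2.
apply/forall_inP => x xD; have := phi_v (coset P x).
by rewrite !ffunE mem_quotient //= => ->; rewrite addrC subrK.
Qed.

Definition cobound_data ij := odflt ((0, 0), 0) [pick stu | cobound_spec ij stu].

Lemma cobound_dataP ij : cobound_spec ij (cobound_data ij).
Proof.
rewrite /cobound_data; case: pickP => [stu // | none].
by have [stu] := cobound_spec_exists ij; rewrite none.
Qed.

Definition alpha ij (a : 'rV['F_p]_m) :=
  (cobound_data ij).1.1 * a 0 ij.1 + (cobound_data ij).1.2 * a 0 ij.2.
Definition beta ij (a : 'rV['F_p]_m) :=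
  wedge_partner (cobound_data ij).1.1 (cobound_data ij).1.2 (a 0 ij.1) (a 0 ij.2).
Definition cobound ij : 'rV['F_p]_n := (cobound_data ij).2.

Lemma coboundE ij x : x \in D -> cobound ij *m rho x = cobound ij + alpha ij (coords x) *: w.
Proof. by move=> xD; have /andP[_ /forall_inP/(_ x xD)/eqP] := cobound_dataP ij. Qed.

Lemma alphaD ij a b : alpha ij (a + b) = alpha ij a + alpha ij b.
Proof. by rewrite /alpha !mxE; ring. Qed.

Lemma betaD ij a b : beta ij (a + b) = beta ij a + beta ij b.
Proof. by rewrite /beta !mxE wedge_partnerD. Qed.

Lemma beta_alpha ij a b :
  beta ij a * alpha ij b - beta ij b * alpha ij a = a 0 ij.2 * b 0 ij.1 - b 0 ij.2 * a 0 ij.1.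
Proof. by have /andP[nz _] := cobound_dataP ij; rewrite wedge_partnerP -?surjective_pairing. Qed.

Section ExtensionCocycle.
Variable lam : gT -> 'F_p.
Hypothesis lamM : {in P &, {morph lam : x y / (x * y)%g >-> x + y}}.
Local Notation prs := (pairs (index_enum 'I_m)).

(* [cform a b] is [lam] of the correction term of the collection formula; the
   coboundaries [cobound ij] contribute [gform], and [sform = gform - cform] is
   symmetric by [beta_alpha], so it is absorbed by the quadratic form [qform]. *)
Definition kappa (ij : 'I_m * 'I_m) := lam [~ gen ij.2, gen ij.1].
Definition gform a b := \sum_(ij <- prs) kappa ij * beta ij a * alpha ij b.
Definition cform (a b : 'rV['F_p]_m) := \sum_(ij <- prs) kappa ij * (a 0 ij.2 * b 0 ij.1).
Definition sform a b := gform a b - cform a b.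
Definition qform a := sform a a / 2%:R.

Lemma sformDl a a' b : sform (a + a') b = sform a b + sform a' b.
Proof.
rewrite /sform /gform /cform -!sumrB -big_split /=; apply: eq_bigr => ij _.
by rewrite betaD !mxE; ring.
Qed.

Lemma sformDr a b b' : sform a (b + b') = sform a b + sform a b'.
Proof.
rewrite /sform /gform /cform -!sumrB -big_split /=; apply: eq_bigr => ij _.
by rewrite alphaD !mxE; ring.
Qed.

Lemma sformC a b : sform a b = sform b a.
Proof.
apply/eqP; rewrite -subr_eq0 /sform /gform /cform -!sumrB big1 // => ij _.
transitivity (kappa ij * (beta ij a * alpha ij b - beta ij b * alpha ij a
  - (a 0 ij.2 * b 0 ij.1 - b 0 ij.2 * a 0 ij.1))); first by ring.
by rewrite beta_alpha subrr mulr0.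
Qed.

Lemma qformD a b : qform (a + b) = qform a + qform b + sform a b.
Proof.
have two_nz : 2%:R != 0 :> 'F_p.
  by rewrite -(dvdn_pcharf (pchar_Fp pr)) dvdn_prime2 //; apply: contraL oddp => /eqP ->.
by rewrite /qform sformDl !sformDr (sformC b a); field.
Qed.

Lemma lam_collection (a b : 'rV['F_p]_m) :
  lam (\prod_(ij <- prs) [~ gen ij.2, gen ij.1] ^+ muln (a 0 ij.2) (b 0 ij.1)) = cform a b.
Proof.
rewrite (Fp_hom_prod lamM) => [|ij]; last by rewrite groupX ?(mem_commg_Phi pD expD) ?gen_mem.
apply: eq_bigr => ij _; rewrite (Fp_homX lamM) ?(mem_commg_Phi pD expD) ?gen_mem //.
by rewrite -mulr_natr natrM !natr_Zp.
Qed.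

Lemma monomial_gen_add (a b : 'rV['F_p]_m) :
  monomial gen (index_enum 'I_m) (fun i => addn (a 0 i) (b 0 i)) = word (a + b).
Proof.
apply: eq_bigr => i _; by rewrite mxE expgD_Fp ?expgD // (expg_p expD) ?gen_mem.
Qed.

Definition ext_scalar x := qform (coords x) + lam ((word (coords x))^-1 * x)%g.

Lemma ext_scalarM x y : x \in D -> y \in D ->
  ext_scalar (x * y)%g = ext_scalar x + ext_scalar y + gform (coords x) (coords y).
Proof.
move=> xD yD; rewrite /ext_scalar coordsM //.
set a := coords x; set b := coords y.
set ux := ((word a)^-1 * x)%g; set uy := ((word b)^-1 * y)%g.
have uxP : ux \in P by apply: word_coords_Phi.
have uyP : uy \in P by apply: word_coords_Phi.
set W := (\prod_(ij <- prs) [~ gen ij.2, gen ij.1] ^+ muln (a 0 ij.2) (b 0 ij.1))%g.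
have WP : W \in P.
  by rewrite group_prod // => ij _; rewrite groupX ?(mem_commg_Phi pD expD) ?gen_mem.
have regroup (wa wb wab W' u v : gT) : (u * wb = wb * u -> wa * wb = wab * W' ->
    wab^-1 * (wa * u * (wb * v)) = W' * u * v)%g.
  by move=> uwb eW; rewrite (mulgA (wa * u)%g) -(mulgA wa) uwb (mulgA wa) eW -!mulgA mulKg.
have -> : ((word (a + b))^-1 * (x * y))%g = (W * ux * uy)%g.
  rewrite -{1}(mulKVg (word a) x) -{1}(mulKVg (word b) y) -/ux -/uy.
  apply: regroup; first by apply: (Phi_commute pD expD cl2); rewrite ?word_mem.
  by rewrite -monomial_gen_add (collection pD expD cl2 gen_mem).
have lamW : lam W = cform a b := lam_collection a b.
by rewrite (lamM (groupM WP uxP) uyP) (lamM WP uxP) lamW qformD /sform; ring.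
Qed.

Definition ext_cocycle : cochain_group gT p n := [ffun x => if x \in D then
  \sum_(ij <- prs) (kappa ij * beta ij (coords x)) *: cobound ij + ext_scalar x *: w
  else 0].

Lemma ext_cocycle_Z1 : ext_cocycle \in Z1 p D rho.
Proof.
apply/Z1P; split=> [x /negbTE xD | x y xD yD]; first by rewrite ffunE xD.
rewrite !ffunE groupM // xD yD coordsM // ext_scalarM // mulmxDl mulmx_suml.
rewrite -(scalemxAl (ext_scalar x) w) fixed_vecK ?mem_quotient //.
under [in LHS]eq_bigr => ij _ do rewrite betaD mulrDr scalerDl.
under [in RHS]eq_bigr => ij _ do
  rewrite -(scalemxAl (kappa ij * beta ij (coords x))) coboundE // scalerDr scalerA.
rewrite !big_split /= -scaler_suml scalerDl scalerDl.
by rewrite [LHS](AC (2*3) ((1*5*3)*(2*4))).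
Qed.

Lemma ext_cocycle_Phi u : u \in P -> ext_cocycle u = lam u *: w.
Proof.
move=> uP; have beta0 ij : beta ij 0 = 0.
  by apply/eqP; rewrite -(inj_eq (addrI (beta ij 0))) -betaD !addr0.
have sform0 : sform 0 0 = 0.
  by apply/eqP; rewrite -(inj_eq (addrI (sform 0 0))) -sformDl !addr0.
rewrite ffunE (subsetP (Phi_sub D)) // /ext_scalar coords_Phi // word0 invg1 mul1g.
rewrite /qform sform0 mul0r add0r.
by rewrite big1 ?add0r // => ij _; rewrite beta0 mulr0 scale0r.
Qed.

End ExtensionCocycle.

Lemma Z1_Phi_fixed f u : f \in Z1 p D rho -> u \in P -> (f u <= rfix_mx K E)%MS.
Proof.
move=> /Z1P[_ fM] uP; have uD := subsetP (Phi_sub D) u uP.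
apply/rfix_mxP => _ /morphimP[x _ xD ->].
have := fM x u xD uD; rewrite -(Phi_commute pD expD cl2 uP xD) fM //.
by rewrite (repr_coset_id K uP) mulmx1 addrC => /addrI.
Qed.

Definition infl_ext (gl : cochain_group (coset_of P) p n * {ffun gT -> 'F_p}) :=
  (infl D gl.1 * ext_cocycle gl.2)%g.

Lemma infl_ext_Phi g l u : g \in Z1 p E K -> l \in Fp_hom p P -> u \in P ->
  infl_ext (g, l) u = l u *: w.
Proof.
move=> gZ /Fp_homP[_ lM] uP.
by rewrite /infl_ext cochain_mulE ffunE (infl_N nsPD gZ) // add0r ext_cocycle_Phi.
Qed.

Lemma infl_ext_inj : {in setX (Z1 p E K) (Fp_hom p P) &, injective infl_ext}.
Proof.
move=> [g l] [g' l'] /setXP[gZ lH] /setXP[g'Z l'H] eq_gl.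
have eq_l : l = l'.
  have [/Fp_homP[l0 _] /Fp_homP[l'0 _]] := (lH, l'H).
  apply/ffunP => x; have [xP | xP] := boolP (x \in P); last by rewrite l0 ?l'0.
  by rewrite -(coefZ (l x)) -(infl_ext_Phi gZ lH xP) eq_gl (infl_ext_Phi g'Z l'H xP) coefZ.
by move: eq_gl; rewrite /infl_ext /= eq_l => /mulIg /(infl_inj gZ g'Z) ->.
Qed.

Lemma Z1_infl_ext : Z1 p D rho = infl_ext @: setX (Z1 p E K) (Fp_hom p P).
Proof.
apply/setP => f; apply/idP/imsetP => [fZ | [[g l] /setXP[gZ /Fp_homP[_ lM]] ->]]; last first.
  by rewrite groupM ?(infl_Z1 nsPD) ?ext_cocycle_Z1.
pose l := [ffun x => if x \in P then coef (f x) else 0].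
have lH : l \in Fp_hom p P.
  have /Z1P[_ fM] := fZ; apply/Fp_homP; split=> [x /negbTE xP | x y xP yP].
    by rewrite ffunE xP.
  rewrite !ffunE groupM // xP yP fM ?(subsetP (Phi_sub D)) //.
  by rewrite (repr_coset_id K) // mulmx1 coefD.
have /Fp_homP[_ lM] := lH.
pose h := (f * (ext_cocycle l)^-1)%g.
have hZ : h \in Z1 p D rho by rewrite groupM ?groupV ?ext_cocycle_Z1.
have hP : {in P, forall u, h u = 0}.
  move=> u uP; rewrite /h cochain_mulE cochain_invE ffunE ffunE ext_cocycle_Phi // ffunE uP.
  by rewrite coefK ?Z1_Phi_fixed ?subrr.
have /imsetP[g gZ eq_h] := Z1_infl nsPD hZ hP.
by exists (g, l); [rewrite inE gZ lH | rewrite /infl_ext /= -eq_h /h mulgKV].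
Qed.

Lemma card_H1_Phi : #|H1 p D rho| = (#|H1 p E K| * #|P|)%N.
Proof.
have rhoM := repr_cosetM nsPD K.
have cardB : #|B1 p D rho| = #|B1 p E K|.
  rewrite (B1_infl K) card_in_imset // => g g' gB g'B.
  by apply: infl_inj; apply: (subsetP (B1_sub_Z1 (repr_mxM K))).
have := card_Z1 rhoM; rewrite Z1_infl_ext card_in_imset ?cardsX; last exact: infl_ext_inj.
rewrite card_Fp_hom ?abelem_Phi // card_Z1 ?cardB; last exact: repr_mxM.
by rewrite mulnAC => /eqP; rewrite eqn_pmul2r ?cardG_gt0 // => /eqP.
Qed.

End CRModule.

Lemma abelem_setX (gT1 gT2 : finGroupType) p (A : {group gT1}) (B : {group gT2}) :
  p.-abelem A -> p.-abelem B -> p.-abelem (setX A B).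
Proof.
move=> abA abB; rewrite (dprod_abelem p (setX_dprod A B)).
by rewrite -morphim_pairg1 -morphim_pair1g !morphim_abelem.
Qed.

Theorem theorem3p9 (gT : finGroupType) (p d : nat) (D : {group gT})
    (n : nat) (K : mx_representation 'F_p (D / 'Phi(D))%G n) :
  prime p -> odd p -> (2 <= d)%N ->
  p.-group D -> exponent D = p -> nil_class D = 2%N ->
  #|D / 'Phi(D)| = (p ^ d)%N ->
  #|'Phi(D) / 'L_3(D)| = (p ^ 'C(d, 2))%N ->
  CR_module p (D / 'Phi(D))%G K ->
  H1 p D (fun x => K (coset 'Phi(D) x))
    \isog setX (H1 p (D / 'Phi(D)) K) [set: Fp_space p 'C(d, 2)].
Proof.
(* d and #|D / 'Phi(D)| only matter through #|'Phi(D)| = p ^ 'C(d, 2). *)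
move=> pr oddp _ pD expD cl2 _ cP CR.
have L3 : 'L_3(D) = 1 by apply/(lcn_nil_classP 2 (pgroup_nil pD)); rewrite cl2.
rewrite L3 card_quotient ?norm1 ?subsetT // indexg1 in cP.
rewrite (isog_abelem_card _ (abelem_H1 _ _ pr)) abelem_setX ?abelem_H1 ?mx_Fp_abelem //=.
by rewrite cardsX cardsT card_mx card_Fp // mul1n (card_H1_Phi pr oddp pD expD cl2 CR) -cP.
Qed.
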